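(* Let $\mathcal{A}^*$ be a formal graded-commutative differential graded algebra over a field of characteristic zero and let $\alpha\in H^1(\mathcal{A}^* )$. Then the deformation spectral sequence $\mathcal{F}^*_r(\mathcal{A}^*,\alpha)$ (with $\mathcal{A}^*$ regarded as a differential graded module over itself) degenerates at its second term $\mathcal{F}^*_2=\mathrm{Ker}\,L_\alpha/\mathrm{Im}\,L_\alpha$, where $L_\alpha:H^*(\mathcal{A}^* )\to H^{*+1}(\mathcal{A}^* )$ is multiplication by $\alpha$; i.e. all differentials $d_r$, $r\geq2$, vanish.
   Context: A DGA is formal if it has the same minimal (Sullivan) model as its cohomology algebra (with zero differential). Deformation spectral sequence for a DG-module $\mathcal{N}^*$ over $\mathcal{A}^*$ and $\alpha=[\xi]$, $\xi\in\mathcal{A}^1$ a cocycle: let $\mathcal{N}^*[[t]]$ be formal power series in $t$ over $\mathcal{N}^*$ with differential $D_tx=dx+t\xi x$; the short exact sequence $0\to\mathcal{N}^*[[t]]\xrightarrow{t}\mathcal{N}^*[[t]]\xrightarrow{\pi}\mathcal{N}^*\to0$ ($\pi$: $t\mapsto0$) yields an exact couple with $D=H^*(\mathcal{N}^*[[t]],D_t)$, $E=H^*(\mathcal{N}^* )$, $i=t$, $j=\pi_*$, $k$ = connecting homomorphism; $\mathcal{F}^*_r(\mathcal{N}^*,\alpha)$ is the spectral sequence of this exact couple (Massey derived couples), which up to isomorphism depends only on $\alpha$. *)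

From HB Require Import structures.
From mathcomp Require Import all_boot all_order all_algebra.
Set Implicit Arguments. Unset Strict Implicit. Unset Printing Implicit Defensive.
Import GRing.Theory.
Local Open Scope ring_scope.

Definition tr (A : nat -> Type) {m n : nat} (e : m = n) (x : A m) : A n :=
  eq_rect m A x n e.

Record dga (R : fieldType) : Type := Dga {
  car : nat -> lmodType R;
  dd : forall n, car n -> car n.+1;
  mul : forall p q, car p -> car q -> car (p + q);
  one : car 0;
  dd_lin : forall n (a : R) (x y : car n), dd (a *: x + y) = a *: dd x + dd y;
  dd_dd : forall n (x : car n), dd (dd x) = 0;
  mul_linl : forall p q (a : R) (x y : car p) (z : car q),
      mul (a *: x + y) z = a *: mul x z + mul y z;
  mul_linr : forall p q (a : R) (x : car p) (y z : car q),
      mul x (a *: y + z) = a *: mul x y + mul x z;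
  mulA : forall p q r (x : car p) (y : car q) (z : car r),
      mul (mul x y) z = @tr (fun n => car n) _ _ (addnA p q r) (mul x (mul y z));
  mul1 : forall p (x : car p), mul one x = x;
  mulr1 : forall p (x : car p), @tr (fun n => car n) _ _ (addn0 p) (mul x one) = x;
  mulC : forall p q (x : car p) (y : car q),
      mul x y = (-1) ^+ (p * q) *: @tr (fun n => car n) _ _ (addnC q p) (mul y x);
  leibniz : forall p q (x : car p) (y : car q),
      dd (mul x y) = @tr (fun n => car n) _ _ (addSn p q) (mul (dd x) y)
                     + (-1) ^+ p *: @tr (fun n => car n) _ _ (addnS p q) (mul x (dd y))
}.

Section DGA.
Variable R : fieldType.
Variable A : dga R.

Definition cocycle n (x : car A n) : Prop := dd x = 0.

Definition coboundary (n : nat) : car A n -> Prop :=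
  match n as n0 return car A n0 -> Prop with
  | 0 => fun x => x = 0
  | m.+1 => fun x => exists w : car A m, x = dd w
  end.

(* degree-n elements of A^*[[t]] : formal power series sum_k t^k Y_k, Y_k in A^n *)
Definition series n := nat -> car A n.

Section Deform.
Variable xi : car A 1.

(* D_t Y = dY + t xi Y *)
Definition Dt n (Y : series n) : series n.+1 :=
  fun k => dd (Y k) + (match k with 0 => 0 | k'.+1 => (mul xi (Y k') : car A n.+1) end).

Definition cocycle_t n (Y : series n) : Prop := forall k, Dt Y k = 0.

Definition coboundary_t (n : nat) : series n -> Prop :=
  match n as n0 return series n0 -> Prop with
  | 0 => fun Y => forall k, Y k = 0
  | m.+1 => fun Y => exists W : series m, forall k, Y k = Dt W k
  end.

Definition tmul n (Y : series n) : series n :=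
  fun k => match k with 0 => 0 | k'.+1 => Y k' end.
Definition tpow n (r : nat) (Y : series n) : series n := iter r (@tmul n) Y.

(* Exact couple D = H(A[[t]], D_t), E = H(A), i = t, j = pi_* (t |-> 0),
   k = connecting homomorphism, all on representatives:
   - i [Y] = [t Y],   j [Y] = [Y_0],
   - k [x] = [C]  iff  there is a lift X of x (X_0 = x) with  t C = D_t X
     (the connecting homomorphism of 0 -> N[[t]] -t-> N[[t]] -pi-> N -> 0). *)
Definition conn_rel n (x : car A n) (C : series n.+1) : Prop :=
  exists X : series n, X 0%N = x /\ (forall k, tmul C k = Dt X k).

(* The r-th differential (r >= 1) of the derived (Massey) couples:
   E_r = k^{-1}(Im i^{r-1}) / j(Ker i^{r-1}),  d_r [x] = [j y] where k x = i^{r-1} y.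
   d_r vanishes iff for all x in E and y in D with k x = i^{r-1} y,
   j y lies in j(Ker i^{r-1}). *)
Definition dr_vanishes (r : nat) : Prop :=
  forall n (x : car A n) (Y : series n.+1),
    cocycle x -> cocycle_t Y ->
    (exists C : series n.+1,
        conn_rel x C /\ coboundary_t (fun k => C k - tpow r.-1 Y k)) ->
    exists Z : series n.+1,
      cocycle_t Z /\ coboundary_t (tpow r.-1 Z) /\ coboundary (Y 0%N - Z 0%N).

End Deform.
End DGA.

Definition dga_qiso (R : fieldType) (M A : dga R) (f : forall n, car M n -> car A n)
  : Prop :=
  [/\ (forall n (a : R) (x y : car M n), f n (a *: x + y) = a *: f n x + f n y),
      (forall n (x : car M n), f n.+1 (dd x) = dd (f n x)),
      (forall p q (x : car M p) (y : car M q), f (p + q)%N (mul x y) = mul (f p x) (f q y)),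
      f 0%N (one M) = one A &
      ((forall n (x : car M n), cocycle x -> coboundary (f n x) -> coboundary x) /\
       (forall n (y : car A n), cocycle y ->
          exists x : car M n, cocycle x /\ coboundary (f n x - y)))].

(* Formality: A and its cohomology (a DGA with zero differential) have a common
   model, i.e. there are quasi-isomorphisms  A <- M -> B  with B having zero
   differential (B is then isomorphic to (H^*(A), 0)). *)
Definition formal (R : fieldType) (A : dga R) : Prop :=
  exists (M B : dga R),
    (forall n (b : car B n), dd b = 0) /\
    exists (f : forall n, car M n -> car A n) (g : forall n, car M n -> car B n),
      dga_qiso f /\ dga_qiso g.

From HB Require Import structures.
From mathcomp Require Import all_boot all_order all_algebra.
From mathcomp Require Import boolp functions.
From Pilot Require Import Defs.
Set Implicit Arguments. Unset Strict Implicit. Unset Printing Implicit Defensive.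
Import GRing.Theory.
Local Open Scope ring_scope.

(* The deformation spectral sequence is an invariant of the pair (A, [xi]) up to
   quasi-isomorphism.  A DGA quasi-isomorphism f induces a map of deformation complexes
   A[[t]] -> A'[[t]] that commutes with t and reduces to f modulo t; solving the cone
   equations one power of t at a time shows that it is again a quasi-isomorphism, so it
   identifies the two exact couples and transports the vanishing of d_r both ways.  If
   xi - xi' = dw, multiplication by exp(t w) identifies the deformation complexes of xi and
   xi' (this needs characteristic zero; characteristic <> 2 also gives xi^2 = 0, i.e.
   D_t^2 = 0).  Formality thus reduces the theorem to a DGA with zero differential, where
   D_t is multiplication by t xi and d_r = 0 for r >= 2 by comparing coefficients. *)

Arguments Dt : simpl never.

Lemma tr_id (T : nat -> Type) n (e : n = n) (x : T n) : @tr T n n e x = x.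
Proof. by rewrite (eq_irrelevance e (erefl n)). Qed.

Fact dd_is_linear (R : fieldType) (A : dga R) n : linear (@dd R A n).
Proof. by move=> a x y; rewrite dd_lin. Qed.
HB.instance Definition _ (R : fieldType) (A : dga R) (n : nat) :=
  GRing.isLinear.Build R (car A n) (car A n.+1) _ (@dd R A n) (@dd_is_linear R A n).

Fact mul_is_linear (R : fieldType) (A : dga R) p q (x : car A p) :
  linear (@mul R A p q x).
Proof. by move=> a y z; rewrite mul_linr. Qed.
HB.instance Definition _ (R : fieldType) (A : dga R) p q x :=
  GRing.isLinear.Build R (car A q) (car A (p + q)) _ (@mul R A p q x)
    (@mul_is_linear R A p q x).

Section DGAAlgebra.
Variables (R : fieldType) (A : dga R).

Lemma mulDl p q (x y : car A p) (z : car A q) : mul (x + y) z = mul x z + mul y z.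
Proof. by have := mul_linl 1 x y z; rewrite !scale1r. Qed.

Lemma mul0l p q (z : car A q) : mul (0 : car A p) z = 0.
Proof. by apply: (addrI (mul (0 : car A p) z)); rewrite -mulDl !addr0. Qed.

Lemma mulZl p q a (x : car A p) (z : car A q) : mul (a *: x) z = a *: mul x z.
Proof. by rewrite -[a *: x]addr0 mul_linl mul0l addr0. Qed.

Lemma dd_one : dd (one A) = 0.
Proof.
have := leibniz (one A) (one A); rewrite !tr_id !mul1 expr0 scale1r.
have := Defs.mulr1 (dd (one A)); rewrite tr_id => ->.
by move=> h; apply: (addrI (dd (one A))); rewrite addr0 -h.
Qed.

Lemma mul_deg0A p q (x : car A 0) (y : car A p) (z : car A q) :
  mul (mul x y) z = mul x (mul y z).
Proof. by rewrite mulA tr_id. Qed.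

Lemma mul_deg1C (eta : car A 1) (x : car A 0) : mul eta x = mul x eta.
Proof. by rewrite mulC tr_id muln0 expr0 scale1r. Qed.

Lemma mul_deg1_deg0 n (eta : car A 1) (x : car A 0) (y : car A n) :
  mul eta (mul x y) = mul x (mul eta y).
Proof. by rewrite -[LHS](@tr_id (car A) _ (addnA 1 0 n)) -mulA mul_deg1C mul_deg0A. Qed.

Lemma leibniz_deg0 n (x : car A 0) (y : car A n) :
  dd (mul x y) = mul (dd x) y + mul x (dd y).
Proof. by rewrite leibniz !tr_id expr0 scale1r. Qed.

Lemma coboundary0 n : coboundary (0 : car A n).
Proof. by case: n => [|n] //; exists 0; rewrite linear0. Qed.

Lemma coboundaryB n (x y : car A n) : coboundary x -> coboundary y -> coboundary (x - y).
Proof.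
case: n x y => [|n] x y; first by move=> -> ->; rewrite subrr.
by move=> [v ->] [w ->]; exists (v - w); rewrite linearB.
Qed.

Hypothesis h2 : 2%:R != 0 :> R.

Lemma mul_deg1_self (xi : car A 1) : mul xi xi = 0.
Proof.
have := mulC xi xi; rewrite tr_id expr1 scaleN1r => /eqP.
by rewrite -subr_eq0 opprK -mulr2n -scaler_nat scaler_eq0 (negbTE h2) => /eqP.
Qed.

Lemma mul_deg1_self_mul (xi : car A 1) n (y : car A n) : mul xi (mul xi y) = 0.
Proof.
rewrite -[LHS](@tr_id (car A) _ (addnA 1 1 n)) -mulA.
by rewrite mul_deg1_self mul0l.
Qed.

End DGAAlgebra.

Arguments coboundary0 {R A n}.

Section Deformation.
Variables (R : fieldType) (A : dga R).

Fact tmul_is_linear n : linear (@tmul R A n).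
Proof. by move=> a Y Z; apply/funext => -[|k]; rewrite !fctE /= ?scaler0 ?addr0. Qed.
HB.instance Definition _ (n : nat) :=
  GRing.isLinear.Build R (series A n) (series A n) _ (@tmul R A n) (@tmul_is_linear n).

Fact tpow_is_linear n r : linear (@tpow R A n r).
Proof. by elim: r => [|r IH] a Y Z //=; rewrite IH linearP. Qed.
HB.instance Definition _ (n r : nat) :=
  GRing.isLinear.Build R (series A n) (series A n) _ (@tpow R A n r) (@tpow_is_linear n r).

Fact Dt_is_linear (xi : car A 1) n : linear (@Dt R A xi n).
Proof.
move=> a Y Z; apply/funext => -[|k]; rewrite !fctE /Dt /= linearP.
  by rewrite !addr0.
by rewrite linearP scalerDr addrACA.
Qed.
HB.instance Definition _ (xi : car A 1) (n : nat) :=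
  GRing.isLinear.Build R (series A n) (series A n.+1) _ (@Dt R A xi n) (@Dt_is_linear xi n).

Lemma DtD xi n : {morph @Dt R A xi n : Y Z / Y + Z}.
Proof. exact: raddfD. Qed.

Lemma DtB xi n : {morph @Dt R A xi n : Y Z / Y - Z}.
Proof. exact: raddfB. Qed.

Lemma series_subE n (Y Z : series A n) k : (Y - Z) k = Y k - Z k.
Proof. by []. Qed.

Lemma tpowS n r (Y : series A n) : tpow r.+1 Y = tmul (tpow r Y).
Proof. by []. Qed.

Lemma tpowE n r (Y : series A n) k :
  tpow r Y k = if (k < r)%N then 0 else Y (k - r)%N.
Proof. by elim: r k => [|r IH] [|k] //=. Qed.

Lemma tmul_inj n : injective (@tmul R A n).
Proof. by move=> Y Z /(congr1 (fun Y => Y \o succn)). Qed.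

Lemma tpow_inj n r : injective (@tpow R A n r).
Proof. by elim: r => [|r IH] Y Z //= /tmul_inj /IH. Qed.

Lemma tpow_split n k (Y : series A n) :
  (forall i, (i < k)%N -> Y i = 0) -> Y = tpow k (fun i => Y (i + k)%N).
Proof.
move=> Ylow; apply/funext => i; rewrite tpowE.
by case: ltnP => [/Ylow | /subnK ->].
Qed.

Variable xi : car A 1.

Lemma Dt_at0 n (Y : series A n) : Dt xi Y 0%N = dd (Y 0%N).
Proof. by rewrite /Dt addr0. Qed.

Lemma Dt_atS n (Y : series A n) k : Dt xi Y k.+1 = dd (Y k.+1) + mul xi (Y k).
Proof. by []. Qed.

Lemma DtE n (Y : series A n) :
  Dt xi Y = (fun k => dd (Y k)) + tmul (fun k => mul xi (Y k)).
Proof. by apply/funext => -[|k]; rewrite ?Dt_at0 ?Dt_atS !fctE /= ?addr0. Qed.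

Lemma Dt_tmul n (Y : series A n) : Dt xi (tmul Y) = tmul (Dt xi Y).
Proof. by apply/funext => -[|[|k]] //=; rewrite /Dt /= linear0 ?addr0. Qed.

Lemma Dt_tpow n r (Y : series A n) : Dt xi (tpow r Y) = tpow r (Dt xi Y).
Proof. by elim: r => [|r IH] //; rewrite !tpowS Dt_tmul IH. Qed.

Lemma cocycle_tP n (Y : series A n) : cocycle_t xi Y <-> Dt xi Y = 0.
Proof. by split => [/funext | DY k]; rewrite ?DY. Qed.

Lemma coboundary_tS n (Y : series A n.+1) :
  coboundary_t xi Y <-> exists W, Y = Dt xi W.
Proof. by split=> -[W YW]; exists W; [apply/funext | move=> k; rewrite YW]. Qed.

Lemma coboundary_tB n (Y Z : series A n) :
  coboundary_t xi Y -> coboundary_t xi Z -> coboundary_t xi (Y - Z).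
Proof.
case: n Y Z => [|n] Y Z; first by move=> Y0 Z0 k; rewrite !fctE /= Y0 Z0 subrr.
move=> /coboundary_tS[V ->] /coboundary_tS[W ->].
by apply/coboundary_tS; exists (V - W); rewrite linearB.
Qed.

Lemma coboundary_t0 n : coboundary_t xi (0 : series A n).
Proof.
case: n => [|n]; first by [].
by apply/coboundary_tS; exists 0; rewrite linear0.
Qed.

Lemma coboundary_tN n (Y : series A n) : coboundary_t xi Y -> coboundary_t xi (- Y).
Proof. by move=> cY; rewrite -sub0r; apply: coboundary_tB (coboundary_t0 _) cY. Qed.

Lemma coboundary_tD n (Y Z : series A n) :
  coboundary_t xi Y -> coboundary_t xi Z -> coboundary_t xi (Y + Z).
Proof. by move=> cY /coboundary_tN cZ; rewrite -[Z]opprK; apply: coboundary_tB. Qed.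

Lemma coboundary_t_tpow n r (Y : series A n) :
  coboundary_t xi Y -> coboundary_t xi (tpow r Y).
Proof.
case: n Y => [|n] Y; first by move=> Y0 k; rewrite tpowE Y0; case: ifP.
by move=> /coboundary_tS[W ->]; apply/coboundary_tS; exists (tpow r W); rewrite Dt_tpow.
Qed.

Lemma coboundary_t_head n (Y : series A n) : coboundary_t xi Y -> coboundary (Y 0%N).
Proof.
case: n Y => [|n] Y; first exact.
by move=> /coboundary_tS[W ->]; rewrite Dt_at0; exists (W 0%N).
Qed.

Definition seriesC n (x : car A n) : series A n := fun k => if k is 0 then x else 0.

Lemma conn_rel_mul n (x : car A n) : cocycle x -> conn_rel xi x (seriesC (mul xi x)).
Proof.
move=> x_cocycle; exists (seriesC x); split=> // -[|[|k]].
- by rewrite Dt_at0 x_cocycle.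
- by rewrite Dt_atS linear0 add0r.
- by rewrite Dt_atS linear0 linear0 addr0.
Qed.

Lemma conn_relE n (x : car A n) C : conn_rel xi x C -> exists X, X 0%N = x /\ tmul C = Dt xi X.
Proof. by move=> [X [X0 CX]]; exists X; split=> //; apply/funext. Qed.

Lemma coboundary_t_tmul n (C : series A n.+1) X :
  tmul C = Dt xi X -> X 0%N = 0 -> coboundary_t xi C.
Proof.
move=> CX X0; apply/coboundary_tS; exists (fun k => X k.+1); apply: tmul_inj.
by rewrite -Dt_tmul CX; congr Dt; apply/funext => -[].
Qed.

Hypotheses (h2 : 2%:R != 0 :> R) (xi_cocycle : cocycle xi).

Lemma Dt_Dt n (Y : series A n) : Dt xi (Dt xi Y) = 0.
Proof.
have xi_dd y : mul xi (dd y) = - dd (mul xi y) :> car A (1 + n).+1.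
  by rewrite leibniz xi_cocycle mul0l !tr_id add0r expr1 scaleN1r opprK.
apply/funext => -[|k].
  by rewrite !Dt_at0 dd_dd.
rewrite Dt_atS Dt_atS linearD /= dd_dd add0r.
case: k => [|k]; first by rewrite Dt_at0 xi_dd addrN.
by rewrite Dt_atS linearD /= xi_dd mul_deg1_self_mul // addr0 addrN.
Qed.

Lemma conn_rel_cocycle n (x : car A n) C : conn_rel xi x C -> cocycle_t xi C.
Proof.
move=> /conn_relE[X [_ CX]]; apply/cocycle_tP/tmul_inj.
by rewrite -Dt_tmul CX Dt_Dt linear0.
Qed.

Lemma conn_rel_coboundary n (x1 x2 : car A n) C1 C2 :
  conn_rel xi x1 C1 -> conn_rel xi x2 C2 -> coboundary (x1 - x2) ->
  coboundary_t xi (C1 - C2).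
Proof.
case: n x1 x2 C1 C2 => [|n] x1 x2 C1 C2 /conn_relE[X1 [<- C1X]] /conn_relE[X2 [<- C2X]];
  have CX : tmul (C1 - C2) = Dt xi (X1 - X2) by rewrite !linearB /= C1X C2X.
  exact: coboundary_t_tmul CX.
move=> [u Xu]; apply: (coboundary_t_tmul (X := X1 - X2 - Dt xi (seriesC u))).
  by rewrite CX [RHS]linearB /= Dt_Dt subr0.
by rewrite !fctE /= Dt_at0 -Xu subrr.
Qed.

End Deformation.

Section TLinear.
Variables (R : fieldType) (A A' : dga R) (n m : nat).
Variable F : series A n -> series A' m.
Hypotheses (F_sub : zmod_morphism F) (F_tmul : forall Y, F (tmul Y) = tmul (F Y)).

Lemma tlinear_tpow r Y : F (tpow r Y) = tpow r (F Y).
Proof. by elim: r => [|r IH] //; rewrite !tpowS F_tmul IH. Qed.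

Lemma tlinear_causal Y Z i : (forall j, (j <= i)%N -> Y j = Z j) -> F Y i = F Z i.
Proof.
move=> YZ; apply/eqP; rewrite -subr_eq0 -[_ - _]/((F Y - F Z) i) -F_sub.
rewrite (tpow_split (k := i.+1) (Y := Y - Z)) => [|j /YZ].
  by rewrite tlinear_tpow tpowE ltnSn.
by rewrite !fctE /= => ->; rewrite subrr.
Qed.

End TLinear.

Lemma approx_limit (T : Type) (P : nat -> (nat -> T) -> Prop) (s0 : nat -> T) :
  P 0%N s0 ->
  (forall k s, P k s -> exists2 s', P k.+1 s' & forall i, (i < k)%N -> s' i = s i) ->
  (forall k s s', (forall i, (i < k)%N -> s i = s' i) -> P k s -> P k s') ->
  exists s, forall k, P k s.
Proof.
move=> P0 Pstep Pprefix.
have ext k s : exists s', P k s -> P k.+1 s' /\ forall i, (i < k)%N -> s' i = s i.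
  have [/Pstep[s' Ps' ss']|nPs] := pselect (P k s); first by exists s'.
  by exists s => /nPs.
pose fix st k := if k is k'.+1 then sval (cid (ext k' (st k'))) else s0.
have stP k : P k (st k) by elim: k => [|k IH] //=; case: (svalP (cid (ext k (st k))) IH).
have st_next k i : (i < k)%N -> st k.+1 i = st k i.
  exact: (svalP (cid (ext k (st k))) (stP k)).2.
have st_stable l k i : (i < k)%N -> st (l + k)%N i = st k i.
  by move=> ik; elim: l => // l IH; rewrite addSn st_next // (leq_trans ik) ?leq_addl.
exists (fun i => st i.+1 i) => k; apply: Pprefix (stP k) => i ik.
by rewrite -(subnK ik) st_stable.
Qed.

Section FilteredQuasiIso.
Variables (R : fieldType) (A A' : dga R) (xi : car A 1) (xi' : car A' 1).
Hypotheses (h2 : 2%:R != 0 :> R) (xi_cocycle : cocycle xi) (xi'_cocycle : cocycle xi').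
Variable phi : forall n, car A n -> car A' n.
Hypotheses (phi_sub : forall n, zmod_morphism (@phi n))
  (phi_dd : forall n (x : car A n), phi (dd x) = dd (phi x))
  (phi_coboundary_inj : forall n (x : car A n), cocycle x -> coboundary (phi x) -> coboundary x)
  (phi_cohomology_surj : forall n (y : car A' n),
     cocycle y -> exists x, cocycle x /\ coboundary (phi x - y)).
HB.instance Definition _ (n : nat) := GRing.isZmodMorphism.Build _ _ (@phi n) (@phi_sub n).
Variable Phi : forall n, series A n -> series A' n.
Hypotheses (Phi_sub : forall n, zmod_morphism (@Phi n))
  (Phi_tmul : forall n (Y : series A n), Phi (tmul Y) = tmul (Phi Y))
  (Phi_Dt : forall n (Y : series A n), Phi (Dt xi Y) = Dt xi' (Phi Y))
  (Phi_at0 : forall n (Y : series A n), Phi Y 0%N = phi (Y 0%N)).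
HB.instance Definition _ (n : nat) := GRing.isZmodMorphism.Build _ _ (@Phi n) (@Phi_sub n).

Lemma qiso_cone_acyclic n (al : car A n.+1) (be : car A' n) :
  dd al = 0 -> dd be = phi al -> exists y, dd y = al /\ coboundary (be - phi y).
Proof.
move=> al_cocycle be_al.
have [y0 al_y0] : coboundary al by apply: phi_coboundary_inj => //; rewrite -be_al; exists be.
have [z [z_cocycle z_be]] : exists z, cocycle z /\ coboundary (phi z - (be - phi y0)).
  by apply: phi_cohomology_surj; rewrite /cocycle linearB /= be_al -phi_dd -al_y0 subrr.
exists (y0 + z); split; first by rewrite linearD /= z_cocycle addr0.
by rewrite raddfD /= opprD addrA -opprB -sub0r; apply: coboundaryB coboundary0 z_be.
Qed.

(* [bd] is the differential of the target one degree down, with constant term [bd0]: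
   [Dt xi'] and [dd] in positive degree, and 0 in degree 0, where a [coboundary_t] vanishes. *)
Section Approximation.
Variables (N M : nat) (bd : series A' M -> series A' N) (bd0 : car A' M -> car A' N).
Hypotheses (bd_sub : zmod_morphism bd) (bd_tmul : forall W, bd (tmul W) = tmul (bd W))
  (bd_at0 : forall W, bd W 0%N = bd0 (W 0%N)) (Dt_bd : forall W, Dt xi' (bd W) = 0)
  (cone_step : forall al be, dd al = 0 -> dd be = phi al ->
     exists y w, dd y = al /\ be - phi y = bd0 w).
HB.instance Definition _ := GRing.isZmodMorphism.Build _ _ bd bd_sub.
Variables (a : series A N.+1) (b : series A' N).
Hypotheses (a_cocycle : Dt xi a = 0) (b_a : Dt xi' b = Phi a).

Let Ys (s : nat -> car A N * car A' M) : series A N := fun i => (s i).1.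
Let Ws (s : nat -> car A N * car A' M) : series A' M := fun i => (s i).2.
(* [s] lists the coefficients of a candidate solution [(Y, W)] of [Dt xi Y = a] and
   [b - Phi Y = bd W]; [approx k s] says that both equations hold modulo t^k. *)
Let approx k s := forall i, (i < k)%N ->
  (a - Dt xi (Ys s)) i = 0 /\ (b - Phi (Ys s) - bd (Ws s)) i = 0.

Lemma approx_prefix k s s' :
  (forall i, (i < k)%N -> s i = s' i) -> approx k s -> approx k s'.
Proof.
move=> ss' sk i ik; have := sk i ik; rewrite !fctE /=.
have agree j : (j <= i)%N -> Ys s j = Ys s' j /\ Ws s j = Ws s' j.
  by move=> ji; rewrite /Ys /Ws ss' // (leq_ltn_trans ji ik).
rewrite (tlinear_causal (@DtB _ _ xi _) (@Dt_tmul _ _ xi _) (Z := Ys s'));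
  last by move=> j /agree[].
rewrite (tlinear_causal (@Phi_sub _) (@Phi_tmul _) (Z := Ys s')); last by move=> j /agree[].
by rewrite (tlinear_causal bd_sub bd_tmul (Z := Ws s')) //; move=> j /agree[].
Qed.

Lemma approx_step k s : approx k s ->
  exists2 s', approx k.+1 s' & forall i, (i < k)%N -> s' i = s i.
Proof.
move=> sk; set Y := Ys s; set W := Ws s.
pose al i := (a - Dt xi Y) (i + k)%N; pose be i := (b - Phi Y - bd W) (i + k)%N.
have ea : a - Dt xi Y = tpow k al by apply: tpow_split => i /sk[].
have eb : b - Phi Y - bd W = tpow k be by apply: tpow_split => i /sk[].
have al_cocycle : Dt xi al = 0.
  apply: (@tpow_inj _ _ _ k); rewrite -Dt_tpow -ea linearB /= a_cocycle Dt_Dt //.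
  by rewrite subrr linear0.
have be_al : Dt xi' be = Phi al.
  apply: (@tpow_inj _ _ _ k); rewrite -Dt_tpow -eb -(tlinear_tpow (@Phi_tmul _)) -ea.
  by rewrite !linearB /= b_a Dt_bd -Phi_Dt subr0 raddfB.
have [y [w [y_al w_be]]] : exists y w, dd y = al 0%N /\ be 0%N - phi y = bd0 w.
  apply: cone_step; first by rewrite -(Dt_at0 xi) al_cocycle.
  by rewrite -(Dt_at0 xi') be_al Phi_at0.
exists (fun i => (Y i + tpow k (seriesC y) i, W i + tpow k (seriesC w) i)); last first.
  by move=> i ik; rewrite !tpowE ik !addr0 /Y /W /Ys /Ws; case: (s i).
have ea' : a - Dt xi (Y + tpow k (seriesC y)) = tpow k (al - Dt xi (seriesC y)).
  by rewrite DtD opprD addrA ea Dt_tpow [RHS]linearB.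
have eb' : b - Phi (Y + tpow k (seriesC y)) - bd (W + tpow k (seriesC w))
    = tpow k (be - Phi (seriesC y) - bd (seriesC w)).
  rewrite (raddfD (@Phi _)) (raddfD bd) /= !opprD !addrA [X in X - _ = _]addrAC eb.
  rewrite (tlinear_tpow (@Phi_tmul _)) (tlinear_tpow bd_tmul).
  by rewrite [RHS]raddfB [in RHS]raddfB.
move=> i; rewrite ltnS => ik.
change ((a - Dt xi (Y + tpow k (seriesC y))) i = 0 /\
  (b - Phi (Y + tpow k (seriesC y)) - bd (W + tpow k (seriesC w))) i = 0).
rewrite ea' eb' !tpowE; case: ltnP => // ki.
have -> : i = k by apply/eqP; rewrite eqn_leq ik ki.
by rewrite subnn !fctE /= Dt_at0 Phi_at0 bd_at0 y_al -w_be !subrr.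
Qed.

Lemma cone_approx : exists Y W, Dt xi Y = a /\ b - Phi Y = bd W.
Proof.
have [s sP] : exists s, forall k, approx k s.
  apply: (approx_limit (s0 := fun _ => (0, 0))) => //.
    exact: approx_step.
  exact: approx_prefix.
exists (Ys s), (Ws s); split; apply/funext => k; have [ea eb] := sP k.+1 k (ltnSn k).
  by apply/esym/eqP; rewrite -subr_eq0 -[_ - _]/((a - Dt xi (Ys s)) k) ea.
by apply/eqP; rewrite -subr_eq0 -[_ - _]/((b - Phi (Ys s) - bd (Ws s)) k) eb.
Qed.

End Approximation.

Lemma cone_acyclic n (a : series A n.+1) (b : series A' n) :
  Dt xi a = 0 -> Dt xi' b = Phi a ->
  exists Y, Dt xi Y = a /\ coboundary_t xi' (b - Phi Y).
Proof.
case: n a b => [|n] a b a_cocycle b_a.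
  have step (al : car A 1) (be : car A' 0) : dd al = 0 -> dd be = phi al ->
      exists y (w : car A' 0), dd y = al /\ be - phi y = 0.
    by move=> al_cocycle /(qiso_cone_acyclic al_cocycle)[y [y_al be_y]]; exists y, 0; split.
  have [Y [W [Ya bY]]] := cone_approx (bd := fun _ => 0) (fun _ _ => esym (subr0 0))
    (fun _ => esym (raddf0 _)) (fun _ => erefl) (fun _ => raddf0 _) step a_cocycle b_a.
  by exists Y; split=> // k; rewrite bY.
have step (al : car A n.+2) (be : car A' n.+1) : dd al = 0 -> dd be = phi al ->
    exists y w, dd y = al /\ be - phi y = dd w.
  by move=> al_cocycle /(qiso_cone_acyclic al_cocycle)[y [y_al [w be_y]]]; exists y, w.
have [Y [W [Ya bY]]] := cone_approx (raddfB (@Dt _ _ xi' n)) (@Dt_tmul _ _ xi' n)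
  (@Dt_at0 _ _ xi' n) (@Dt_Dt _ _ xi' h2 xi'_cocycle n) step a_cocycle b_a.
by exists Y; split=> //; apply/coboundary_tS; exists W.
Qed.

Lemma Phi_cohomology_surj n (Y' : series A' n) : cocycle_t xi' Y' ->
  exists Y, cocycle_t xi Y /\ coboundary_t xi' (Phi Y - Y').
Proof.
move=> /cocycle_tP Y'_cocycle.
have [|Y [Y_cocycle Y'Y]] := cone_acyclic (a := 0) (b := Y') (linear0 _).
  by rewrite raddf0.
by exists Y; split; [apply/cocycle_tP | rewrite -opprB; apply: coboundary_tN].
Qed.

Lemma Phi_coboundary_inj n (Y : series A n) :
  cocycle_t xi Y -> coboundary_t xi' (Phi Y) -> coboundary_t xi Y.
Proof.
move=> /cocycle_tP Y_cocycle; case: n Y Y_cocycle => [|n] Y Y_cocycle; last first.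
  move=> /coboundary_tS[W PhiY]; have [Z [ZY _]] := cone_acyclic Y_cocycle (esym PhiY).
  by apply/coboundary_tS; exists Z.
move=> /= PhiY0; have {}PhiY0 : Phi Y = 0 by apply/funext.
suff Ylow k : (forall i, (i < k)%N -> Y i = 0) -> Y k = 0.
  by move=> k; elim/ltn_ind: k => k IH; apply: Ylow => i /IH.
move=> /tpow_split YZ; set Z := fun i => _ in YZ.
have Z_cocycle : Dt xi Z = 0.
  by apply: (@tpow_inj _ _ _ k); rewrite -Dt_tpow -YZ Y_cocycle !linear0.
have PhiZ : Phi Z = 0.
  by apply: (@tpow_inj _ _ _ k); rewrite -(tlinear_tpow (@Phi_tmul _)) -YZ PhiY0 linear0.
have := phi_coboundary_inj (x := Z 0%N); rewrite /cocycle -(Dt_at0 xi) Z_cocycle -Phi_at0 PhiZ.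
by apply.
Qed.

Lemma phi_cocycle n (x : car A n) : cocycle x -> cocycle (phi x).
Proof. by rewrite /cocycle -phi_dd => ->; rewrite raddf0. Qed.

Lemma phi_coboundary n (x : car A n) : coboundary x -> coboundary (phi x).
Proof.
case: n x => [|n] x; first by move=> ->; rewrite raddf0.
by move=> [w ->]; exists (phi w).
Qed.

Lemma Phi_cocycle n (Y : series A n) : cocycle_t xi Y -> cocycle_t xi' (Phi Y).
Proof. by move=> /cocycle_tP Y_cocycle; apply/cocycle_tP; rewrite -Phi_Dt Y_cocycle raddf0. Qed.

Lemma Phi_coboundary n (Y : series A n) : coboundary_t xi Y -> coboundary_t xi' (Phi Y).
Proof.
case: n Y => [|n] Y; last first.
  by move=> /coboundary_tS[W ->]; apply/coboundary_tS; exists (Phi W); rewrite Phi_Dt.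
move=> Y0; have -> : Y = 0 by apply/funext.
by rewrite raddf0; apply: coboundary_t0.
Qed.

Lemma Phi_conn_rel n (x : car A n) C : conn_rel xi x C -> conn_rel xi' (phi x) (Phi C).
Proof.
move=> /conn_relE[X [X0 CX]]; exists (Phi X); split; first by rewrite Phi_at0 X0.
by move=> k; rewrite -Phi_tmul CX Phi_Dt.
Qed.

Lemma dr_vanishes_image r : dr_vanishes xi r -> dr_vanishes xi' r.
Proof.
move=> dr_xi n x' Y' x'_cocycle Y'_cocycle [C' [x'C' C'Y']].
have [x [x_cocycle xx']] := phi_cohomology_surj x'_cocycle.
have [Y [Y_cocycle YY']] := Phi_cohomology_surj Y'_cocycle.
have xC := conn_rel_mul xi x_cocycle; set C := seriesC _ in xC.
have CY : coboundary_t xi (C - tpow r.-1 Y).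
  apply: Phi_coboundary_inj.
    apply/cocycle_tP; rewrite DtB Dt_tpow.
    move/cocycle_tP: (conn_rel_cocycle h2 xi_cocycle xC) ->.
    by move/cocycle_tP: Y_cocycle ->; rewrite linear0 subrr.
  have -> : Phi (C - tpow r.-1 Y) = (Phi C - C')
      + (C' - tpow r.-1 Y') - tpow r.-1 (Phi Y - Y').
    by rewrite raddfB /= (tlinear_tpow (@Phi_tmul _)) subrKA [in RHS]raddfB /= opprB subrKA.
  apply: coboundary_tB (coboundary_t_tpow _ YY').
  apply: coboundary_tD (C'Y').
  exact (conn_rel_coboundary h2 xi'_cocycle (Phi_conn_rel xC) x'C' xx').
have [Z [Z_cocycle [tZ YZ]]] := dr_xi n x Y x_cocycle Y_cocycle (ex_intro _ _ (conj xC CY)).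
exists (Phi Z); split; first exact: Phi_cocycle.
split; first by rewrite -(tlinear_tpow (@Phi_tmul _)); apply: Phi_coboundary.
have := coboundaryB (phi_coboundary YZ) (coboundary_t_head YY').
by rewrite phi_sub -!Phi_at0 series_subE opprB addrC subrKA.
Qed.

Lemma dr_vanishes_preimage r : dr_vanishes xi' r -> dr_vanishes xi r.
Proof.
move=> dr_xi' n x Y x_cocycle Y_cocycle [C [xC CY]].
have CY' : coboundary_t xi' (Phi C - tpow r.-1 (Phi Y)).
  by rewrite -(tlinear_tpow (@Phi_tmul _)) -raddfB; apply: Phi_coboundary.
have [Z' [Z'_cocycle [tZ' YZ']]] := dr_xi' n (phi x) (Phi Y) (phi_cocycle x_cocycle)
  (Phi_cocycle Y_cocycle) (ex_intro _ _ (conj (Phi_conn_rel xC) CY')).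
have [Z [Z_cocycle ZZ']] := Phi_cohomology_surj Z'_cocycle.
exists Z; split=> //; split.
  apply: Phi_coboundary_inj.
    by apply/cocycle_tP; move/cocycle_tP: Z_cocycle => Z_cocycle; rewrite Dt_tpow Z_cocycle linear0.
  rewrite (tlinear_tpow (@Phi_tmul _)) -[Phi Z](subrK Z') linearD /=.
  exact: coboundary_tD (coboundary_t_tpow _ ZZ') tZ'.
apply: phi_coboundary_inj.
  by rewrite /cocycle raddfB /= -(Dt_at0 xi) -(Dt_at0 xi Z) Y_cocycle Z_cocycle subrr.
have := coboundaryB YZ' (coboundary_t_head ZZ').
by rewrite phi_sub -!Phi_at0 series_subE opprB subrKA.
Qed.

Lemma dr_vanishes_transfer r : dr_vanishes xi r <-> dr_vanishes xi' r.
Proof. by split; [apply: dr_vanishes_image | apply: dr_vanishes_preimage]. Qed.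

End FilteredQuasiIso.

Section ZeroDifferential.
Variables (R : fieldType) (B : dga R) (xi : car B 1).
Hypothesis dd_eq0 : forall n (b : car B n), dd b = 0.

Lemma Dt_zero_diff n (Y : series B n) : Dt xi Y = tmul (fun k => mul xi (Y k)).
Proof. by apply/funext => -[|k]; rewrite ?Dt_at0 ?Dt_atS dd_eq0 ?add0r. Qed.

(* Here D_t is multiplication by t xi.  Comparing the coefficients of t^(r-1) shows
   Y_0 = xi V, so the constant series Y_0 is a D_t-cocycle with t^(r-1) Y_0 = D_t (t^(r-2) V). *)
Lemma dr_vanishes_zero_diff r : (2 <= r)%N -> dr_vanishes xi r.
Proof.
case: r => [|[|s]] // _ n x Y _ /cocycle_tP Y_cocycle.
move=> [C [/conn_relE[X [_ CX]] /coboundary_tS[W CYW]]].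
pose V := X s.+1 - W s.
have Y0 : Y 0%N = mul xi V.
  have := congr1 (fun F => F s.+2) CX; have := congr1 (fun F => F s.+1) CYW.
  rewrite !Dt_zero_diff /= tpowE ltnn subnn => CW CX'.
  by rewrite linearB /= -CX' -CW subKr.
exists (seriesC (Y 0%N)); split; [|split].
- apply/cocycle_tP; rewrite Dt_zero_diff; apply/funext => -[|[|k]] //=; last by rewrite linear0.
  by have := congr1 (fun F => F 1%N) Y_cocycle; rewrite Dt_zero_diff.
- apply/coboundary_tS; exists (tpow s (seriesC V)); rewrite Dt_zero_diff tpowS.
  congr tmul; apply/funext => k; rewrite !tpowE; case: ltnP => _; first by rewrite linear0.
  by case: (k - s)%N => [|i] /=; rewrite ?Y0 ?linear0.
- by rewrite subrr; apply: coboundary0.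
Qed.

End ZeroDifferential.

Section Morphism.
Variables (R : fieldType) (A A' : dga R) (f : forall n, car A n -> car A' n).
Hypotheses (f_lin : forall n, linear (@f n))
  (f_dd : forall n (x : car A n), f (dd x) = dd (f x))
  (f_mul : forall p q (x : car A p) (y : car A q), f (mul x y) = mul (f x) (f y)).
HB.instance Definition _ (n : nat) :=
  GRing.isLinear.Build R (car A n) (car A' n) _ (@f n) (@f_lin n).

Definition series_map n (Y : series A n) : series A' n := fun k => f (Y k).

Lemma series_map_sub n : zmod_morphism (@series_map n).
Proof. by move=> Y Z; apply/funext => k; exact: raddfB. Qed.

Lemma series_map_tmul n (Y : series A n) : series_map (tmul Y) = tmul (series_map Y).
Proof. by apply/funext => -[|k] //; exact: raddf0. Qed.

Lemma series_map_Dt xi n (Y : series A n) :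
  series_map (Dt xi Y) = Dt (f xi) (series_map Y).
Proof.
apply/funext => -[|k]; rewrite /series_map ?Dt_at0 ?Dt_atS //.
by rewrite raddfD /= f_dd; congr (_ + _); exact (f_mul xi (Y k)).
Qed.

Lemma f_cocycle n (x : car A n) : cocycle x -> cocycle (f x).
Proof. by rewrite /cocycle -f_dd => ->; rewrite raddf0. Qed.

End Morphism.

Lemma dr_vanishes_qiso (R : fieldType) (A A' : dga R) (f : forall n, car A n -> car A' n)
    (h2 : 2%:R != 0 :> R) (f_qiso : dga_qiso f) (xi : car A 1) (xi_cocycle : cocycle xi) r :
  dr_vanishes xi r <-> dr_vanishes (f 1%N xi) r.
Proof.
case: f_qiso => f_lin f_dd f_mul _ [f_inj f_surj].
have f_sub n : zmod_morphism (f n) by move=> x y; rewrite addrC -scaleN1r f_lin scaleN1r addrC.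
exact (dr_vanishes_transfer h2 xi_cocycle (f_cocycle f_lin f_dd xi_cocycle) f_sub f_dd f_inj
  f_surj (series_map_sub f_lin) (series_map_tmul f_lin) (series_map_Dt f_lin f_dd f_mul xi)
  (fun _ _ => erefl) r).
Qed.

Section Gauge.
Variables (R : fieldType) (A : dga R) (w : car A 0).

Fixpoint wpow i : car A 0 := if i is j.+1 then mul w (wpow j) else one A.

Lemma dd_wpow i : dd (wpow i.+1) = i.+1%:R *: mul (wpow i) (dd w).
Proof.
elim: i => [|i IH].
  by rewrite /= scale1r mul1; have := Defs.mulr1 w; rewrite tr_id => ->.
rewrite [wpow i.+2]/= leibniz_deg0 IH linearZ /= mul_deg1C !mul_deg0A.
by rewrite -[in RHS](addn1 i.+1) natrD scalerDl scale1r addrC.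
Qed.

Definition exp_coef i : car A 0 := (i`!%:R)^-1 *: wpow i.

Lemma exp_coef0 : exp_coef 0 = one A.
Proof. by rewrite /exp_coef /= invr1 scale1r. Qed.

Hypothesis char0 : [pchar R] =i pred0.

Lemma dd_exp_coef i : dd (exp_coef i.+1) = mul (exp_coef i) (dd w).
Proof.
rewrite /exp_coef linearZ /= dd_wpow scalerA mulZl; congr (_ *: _).
have /pcharf0P nat_eq0 := char0.
by rewrite factS natrM invfM mulrAC mulVf ?nat_eq0 // mul1r.
Qed.

(* Multiplication by exp(t w) = \sum_i t^i w^i / i!. *)
Definition gauge n (Y : series A n) : series A n :=
  fun k => \sum_(i < k.+1) mul (exp_coef i) (Y (k - i)%N).

Lemma gauge_sub n : zmod_morphism (@gauge n).
Proof.
move=> Y Z; apply/funext => k; rewrite /gauge !fctE /= -sumrB.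
by apply: eq_bigr => i _; rewrite raddfB.
Qed.
HB.instance Definition _ (n : nat) := GRing.isZmodMorphism.Build _ _ (@gauge n) (@gauge_sub n).

Lemma gauge_tmul n (Y : series A n) : gauge (tmul Y) = tmul (gauge Y).
Proof.
apply/funext => -[|k]; rewrite /gauge /=; first by rewrite big_ord1 raddf0.
rewrite big_ord_recr /= subnn raddf0 addr0; apply: eq_bigr => i _.
by rewrite subSn // -ltnS.
Qed.

Lemma gauge_at0 n (Y : series A n) : gauge Y 0%N = Y 0%N.
Proof. by rewrite /gauge big_ord1 /= exp_coef0 mul1. Qed.

Lemma gauge_mul n (eta : car A 1) (Y : series A n) :
  (fun k => mul eta (gauge Y k)) = gauge (fun k => mul eta (Y k)).
Proof.
apply/funext => k; rewrite /gauge raddf_sum.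
by apply: eq_bigr => i _; exact: mul_deg1_deg0.
Qed.

Lemma dd_gauge n (Y : series A n) : (fun k => dd (gauge Y k))
  = gauge (fun k => dd (Y k)) + tmul (gauge (fun k => mul (dd w) (Y k))).
Proof.
apply/funext => k; rewrite !fctE /= /gauge raddf_sum /=.
under eq_bigr do rewrite leibniz_deg0.
rewrite big_split /= addrC; congr (_ + _).
case: k => [|k]; first by rewrite big_ord1 /= exp_coef0 dd_one mul0l.
rewrite big_ord_recl /= exp_coef0 dd_one mul0l add0r; apply: eq_bigr => i _.
by rewrite dd_exp_coef mul_deg0A /bump /= subSS.
Qed.

Variables (xs xt : car A 1).
Hypothesis xs_xt : xs - xt = dd w.

Lemma gauge_Dt n (Y : series A n) : gauge (Dt xs Y) = Dt xt (gauge Y).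
Proof.
rewrite !DtE.
have -> : (fun k => mul xs (Y k)) = (fun k => mul (dd w) (Y k)) + (fun k => mul xt (Y k)).
  by apply/funext => k; rewrite !fctE /= -mulDl -xs_xt subrK.
by rewrite raddfD /= gauge_tmul dd_gauge gauge_mul !raddfD /= addrA.
Qed.

End Gauge.

Lemma dr_vanishes_cohomologous (R : fieldType) (A : dga R) (char0 : [pchar R] =i pred0)
    (xs xt : car A 1) (w : car A 0) (xs_xt : xs - xt = dd w) (xt_cocycle : cocycle xt) r :
  dr_vanishes xs r <-> dr_vanishes xt r.
Proof.
have h2 : 2%:R != 0 :> R by move/pcharf0P: char0 => ->.
have xs_cocycle : cocycle xs.
  by rewrite /cocycle -(subrK xt xs) xs_xt linearD /= dd_dd xt_cocycle addr0.
have id_surj n (y : car A n) : cocycle y -> exists x, cocycle x /\ coboundary (x - y).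
  by exists y; rewrite subrr; split=> //; apply: coboundary0.
exact (dr_vanishes_transfer h2 xs_cocycle xt_cocycle (phi := fun n (x : car A n) => x)
  (fun _ _ _ => erefl) (fun _ _ => erefl) (fun _ _ _ h => h) id_surj (gauge_sub w)
  (gauge_tmul w) (gauge_Dt char0 xs_xt) (gauge_at0 w) r).
Qed.

Theorem theorem3p14 (R : fieldType) (hR : [pchar R]%R =i pred0) (A : dga R)
    (hA : formal A) (xi : car A 1) (hxi : cocycle xi) :
  forall r : nat, (2 <= r)%N -> dr_vanishes xi r.
Proof.
move=> r r_ge2; have h2 : 2%:R != 0 :> R by move/pcharf0P: hR => ->.
have [M [B [B_dd0 [f [g [f_qiso g_qiso]]]]]] := hA.
have [_ _ _ _ [_ f_surj]] := f_qiso.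
have [xM [xM_cocycle [w fxM_xi]]] := f_surj 1%N xi hxi.
rewrite -(dr_vanishes_cohomologous hR fxM_xi hxi) -(dr_vanishes_qiso h2 f_qiso xM_cocycle).
by rewrite (dr_vanishes_qiso h2 g_qiso xM_cocycle); apply: dr_vanishes_zero_diff.
Qed.
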